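(* Let $q>0$ and let $U,V\in C^{4}(\mathbb{R}^{2})$ be radially symmetric, $U>0$, $V>0$, viewed as functions of $r=|x|\in[0,\infty)$, such that $$\Delta^{2}(U-V)(r)\ge V^{-q}(r)-U^{-q}(r)\quad\forall r\ge 0,\qquad U(0)=V(0),\qquad U^{(k)}(0)=V^{(k)}(0),\ k=1,2,3.$$ Then $U(r)\ge V(r)$ for all $r\ge 0$. If furthermore $\Delta^{2}(U-V)(0)>0$, then $U(r)>V(r)$ for all $r>0$.
   Context: For radial functions on $\mathbb{R}^{2}$, $\Delta f(r)=\frac1r(rf'(r))'$; derivatives at $r=0$ are one-sided derivatives of the profile. *)

From Stdlib Require Import Reals.
From Coquelicot Require Import Coquelicot.
Open Scope R_scope.

Definition dx (f : R -> R -> R) : R -> R -> R :=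
  fun x y => Derive (fun t => f t y) x.
Definition dy (f : R -> R -> R) : R -> R -> R :=
  fun x y => Derive (fun t => f x t) y.

Definition cont2 (f : R -> R -> R) : Prop :=
  forall p : R * R, continuous (fun q : R * R => f (fst q) (snd q)) p.

Fixpoint Ck2 (n : nat) (f : R -> R -> R) : Prop :=
  match n with
  | O => cont2 f
  | S m => cont2 f /\
           (forall x y, ex_derive (fun t => f t y) x /\ ex_derive (fun t => f x t) y) /\
           Ck2 m (dx f) /\ Ck2 m (dy f)
  end.

Definition radial (f : R -> R -> R) : Prop :=
  exists g : R -> R, forall x y, f x y = g (sqrt (x ^ 2 + y ^ 2)).

Definition lap (f : R -> R -> R) : R -> R -> R :=
  fun x y => dx (dx f) x y + dy (dy f) x y.
Definition bilap (f : R -> R -> R) : R -> R -> R := lap (lap f).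

From Stdlib Require Import Reals Lra Lia Psatz FunctionalExtensionality.
From Coquelicot Require Import Coquelicot.
Open Scope R_scope.

(* Put w = U - V and read everything on the positive x-axis: g = w(s,0),
   h = Delta w(s,0), B = Delta^2 w(s,0).  For a radial function the Laplacian is
   p'' + p'/s, i.e. (s p')' = s Delta p, so h and B control g through two
   "layers" of the same first-order flux identity. *)

Lemma mvt_lower_bound (f f' : R -> R) (a b m : R) : a <= b ->
  (forall x, is_derive f x (f' x)) -> (forall x, a < x < b -> m <= f' x) ->
  f a + m * (b - a) <= f b.
Proof.
  intros Hab Hd Hm. destruct (Req_dec a b) as [->|Hne]; [lra|].
  destruct (MVT_cor2 f f' a b) as [c [Hc Hcab]]; [lra| |].
  - intros c _; apply is_derive_Reals, Hd.
  - specialize (Hm c Hcab). nra.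
Qed.

Lemma mvt_strict_increase (f f' : R -> R) (a b : R) : a < b ->
  (forall x, is_derive f x (f' x)) -> (forall x, a < x < b -> 0 < f' x) ->
  f a < f b.
Proof.
  intros Hab Hd Hm.
  destruct (MVT_cor2 f f' a b) as [c [Hc Hcab]]; [lra| |].
  - intros c _; apply is_derive_Reals, Hd.
  - specialize (Hm c Hcab). nra.
Qed.

Lemma positive_from_zero (f f' : R -> R) (e : R) :
  (forall x, is_derive f x (f' x)) -> f 0 = 0 -> 0 < e ->
  (forall x, 0 < x -> 0 <= f' x) -> (forall x, 0 < x < e -> 0 < f' x) ->
  forall t, 0 < t -> 0 < f t.
Proof.
  intros Hd Hf0 He Hnonneg Hpos t Ht.
  set (c := Rmin t (e / 2)).
  assert (Hc : 0 < c <= t /\ c < e).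
  { unfold c; pose proof (Rmin_l t (e / 2)); pose proof (Rmin_r t (e / 2)).
    split; [split; [apply Rmin_glb_lt|]|]; lra. }
  assert (Hfc : f 0 < f c).
  { apply (mvt_strict_increase f f'); [lra|exact Hd|]. intros x Hx; apply Hpos; lra. }
  pose proof (mvt_lower_bound f f' c t 0 (proj2 (proj1 Hc)) Hd) as Hct.
  enough (f c + 0 * (t - c) <= f t) by lra.
  apply Hct. intros x Hx; apply Hnonneg; lra.
Qed.

Lemma is_derive_mult_id (f f' : R -> R) (x : R) : is_derive f x (f' x) ->
  is_derive (fun s => s * f s) x (f x + x * f' x).
Proof.
  intro Hf.
  pose proof (is_derive_mult (fun s => s) f x 1 (f' x) (is_derive_id x) Hf Rmult_comm) as H.
  unfold plus, mult in H; simpl in H.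
  replace (f x + x * f' x) with (1 * f x + x * f' x) by ring. exact H.
Qed.

Lemma is_derive_continuity_pt (f : R -> R) (x l : R) : is_derive f x l -> continuity_pt f x.
Proof.
  intro H. apply derivable_continuous_pt. exists l. apply is_derive_Reals, H.
Qed.

Section RadialLayer.
Variables phi phi1 phi2 psi : R -> R.
Hypothesis Hphi : forall s, is_derive phi s (phi1 s).
Hypothesis Hphi1 : forall s, is_derive phi1 s (phi2 s).
Hypothesis Hpsi : forall s, 0 < s -> psi s = phi2 s + phi1 s / s.

Lemma flux_derive (s : R) : is_derive (fun t => t * phi1 t) s (phi1 s + s * phi2 s).
Proof. exact (is_derive_mult_id phi1 phi2 s (Hphi1 s)). Qed.

Lemma flux_identity (s : R) : 0 < s -> phi1 s + s * phi2 s = s * psi s.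
Proof. intro Hs. rewrite (Hpsi s Hs). field. lra. Qed.

Lemma layer_lower_bound (a b M : R) : 0 <= a <= b -> 0 <= M ->
  0 <= a * phi1 a -> 0 <= phi a -> (forall s, a < s < b -> - M <= psi s) ->
  forall t, a <= t <= b -> - M * t * (b - a) <= t * phi1 t /\ - M * (b - a) ^ 2 <= phi t.
Proof.
  intros Hab HM Hflux0 Hphi0 Hpsi_low.
  assert (Hflux : forall t, a <= t <= b -> - M * t * (b - a) <= t * phi1 t).
  { intros t Ht.
    pose proof (mvt_lower_bound _ _ a t (- M * t) (proj1 Ht) flux_derive) as H.
    assert (a * phi1 a + - M * t * (t - a) <= t * phi1 t).
    { apply H. intros x Hx. rewrite (flux_identity x) by lra.
      specialize (Hpsi_low x ltac:(lra)). nra. }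
    assert (0 <= M * t * (b - t)) by (apply Rmult_le_pos; [apply Rmult_le_pos|]; lra).
    nra. }
  assert (Hslope : forall s, a < s <= b -> - M * (b - a) <= phi1 s).
  { intros s Hs. apply (Rmult_le_reg_l s); [lra|].
    specialize (Hflux s ltac:(lra)). lra. }
  intros t Ht. split; [exact (Hflux t Ht)|].
  pose proof (mvt_lower_bound phi phi1 a t (- M * (b - a)) (proj1 Ht) Hphi) as H.
  assert (phi a + - M * (b - a) * (t - a) <= phi t).
  { apply H. intros x Hx. apply Hslope. lra. }
  assert (0 <= M * (b - a)) by (apply Rmult_le_pos; lra).
  nra.
Qed.

Lemma layer_positive (e : R) : phi 0 = 0 -> 0 < e ->
  (forall s, 0 < s -> 0 <= psi s) -> (forall s, 0 < s < e -> 0 < psi s) ->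
  forall t, 0 < t -> 0 < phi t.
Proof.
  intros Hphi0 He Hpsi_nonneg Hpsi_pos.
  assert (Hflux : forall t, 0 < t -> 0 < t * phi1 t).
  { apply (positive_from_zero _ _ e flux_derive); [ring|exact He| |];
      intros x Hx; rewrite (flux_identity x) by lra.
    - apply Rmult_le_pos; [lra|]. apply Hpsi_nonneg; lra.
    - apply Rmult_lt_0_compat; [lra|]. apply Hpsi_pos; lra. }
  assert (Hslope : forall s, 0 < s -> 0 < phi1 s).
  { intros s Hs. specialize (Hflux s Hs). nra. }
  apply (positive_from_zero phi phi1 1 Hphi Hphi0); [lra| |].
  - intros x Hx. left. apply Hslope; lra.
  - intros x Hx. apply Hslope; lra.
Qed.

End RadialLayer.

Section BiharmonicProfile.
Variables g g1 g2 h h1 h2 B : R -> R.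
Hypothesis Hg : forall s, is_derive g s (g1 s).
Hypothesis Hg1 : forall s, is_derive g1 s (g2 s).
Hypothesis Hh : forall s, is_derive h s (h1 s).
Hypothesis Hh1 : forall s, is_derive h1 s (h2 s).
Hypothesis Hhg : forall s, 0 < s -> h s = g2 s + g1 s / s.
Hypothesis HBh : forall s, 0 < s -> B s = h2 s + h1 s / s.
Hypothesis Hg0 : g 0 = 0.
Hypothesis Hh0 : h 0 = 0.

(* The invariant propagated along [0,T]: both fluxes and both profiles are
   nonnegative at a. *)
Definition profile_data (a : R) : Prop :=
  0 <= a * h1 a /\ 0 <= h a /\ 0 <= a * g1 a /\ 0 <= g a.

(* Under B >= K min(g,0), g stays nonnegative on any interval [a,b] starting
   from the invariant and short enough that K (b-a)^4 < 1: a negative minimum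
   -N of g on [a,b] would force, through the two layers, g >= -K N (b-a)^4 > -N. *)
Lemma profile_nonneg_short (K T a b : R) : 0 <= K ->
  (forall s, 0 <= s <= T -> K * Rmin (g s) 0 <= B s) ->
  0 <= a <= b -> b <= T -> K * (b - a) ^ 4 < 1 ->
  profile_data a -> forall s, a <= s <= b -> 0 <= g s.
Proof.
  intros HK HB Hab HbT Hshort [Dh1 [Dh [Dg1 Dg]]].
  destruct (continuity_ab_min g a b (proj2 Hab)) as [m [Hmin Hm]].
  { intros c _; exact (is_derive_continuity_pt g c _ (Hg c)). }
  destruct (Rle_or_lt 0 (g m)) as [Hpos|Hneg].
  { intros s Hs. specialize (Hmin s Hs). lra. }
  exfalso. set (N := - g m).
  assert (HKN : 0 <= K * N) by (apply Rmult_le_pos; unfold N; lra).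
  assert (HBN : forall s, a < s < b -> - (K * N) <= B s).
  { intros s Hs. specialize (HB s ltac:(lra)). specialize (Hmin s ltac:(lra)).
    assert (- N <= Rmin (g s) 0) by (apply Rmin_glb; unfold N; lra).
    assert (K * (- N) <= K * Rmin (g s) 0) by (apply Rmult_le_compat_l; lra).
    lra. }
  assert (Hh_low : forall s, a < s < b -> - (K * N * (b - a) ^ 2) <= h s).
  { intros s Hs.
    destruct (layer_lower_bound h h1 h2 B Hh Hh1 HBh a b (K * N) Hab
                HKN Dh1 Dh HBN s ltac:(lra)) as [_ H].
    lra. }
  destruct (layer_lower_bound g g1 g2 h Hg Hg1 Hhg a b (K * N * (b - a) ^ 2) Hab
              (Rmult_le_pos _ _ HKN (pow2_ge_0 (b - a))) Dg1 Dg Hh_low m Hm)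
    as [_ Hgm].
  assert (0 < N * (1 - K * (b - a) ^ 4)) by (unfold N; nra).
  unfold N in *. nra.
Qed.

(* On such a short interval B >= 0, so the layers with M = 0 carry the whole
   invariant from a to every point of [a,b]. *)
Lemma profile_data_propagation (K T a b : R) : 0 <= K ->
  (forall s, 0 <= s <= T -> K * Rmin (g s) 0 <= B s) ->
  0 <= a <= b -> b <= T -> K * (b - a) ^ 4 < 1 ->
  profile_data a -> forall t, a <= t <= b -> profile_data t.
Proof.
  intros HK HB Hab HbT Hshort Da.
  pose proof (profile_nonneg_short K T a b HK HB Hab HbT Hshort Da) as Hg_nonneg.
  destruct Da as [Dh1 [Dh [Dg1 Dg]]].
  assert (HB0 : forall s, a < s < b -> - 0 <= B s).
  { intros s Hs. specialize (HB s ltac:(lra)).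
    rewrite Rmin_right in HB by (apply Hg_nonneg; lra). lra. }
  pose proof (layer_lower_bound h h1 h2 B Hh Hh1 HBh a b 0 Hab ltac:(lra) Dh1 Dh HB0)
    as Hh_layer.
  assert (Hh_nonneg : forall s, a < s < b -> - 0 <= h s)
    by (intros s Hs; destruct (Hh_layer s ltac:(lra)); lra).
  intros t Ht.
  destruct (Hh_layer t Ht) as [Et1 Et2].
  destruct (layer_lower_bound g g1 g2 h Hg Hg1 Hhg a b 0 Hab ltac:(lra) Dg1 Dg Hh_nonneg t Ht)
    as [Et3 Et4].
  unfold profile_data. lra.
Qed.

(* Comparison principle: B >= K min(g,0) on [0,T] forces g >= 0 on [0,T],
   by propagating the invariant from 0 in steps of length 1/(K+1). *)
Lemma profile_nonneg (K T : R) : 0 <= K ->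
  (forall s, 0 <= s <= T -> K * Rmin (g s) 0 <= B s) ->
  forall t, 0 <= t <= T -> 0 <= g t.
Proof.
  intros HK HB.
  set (d := / (K + 1)).
  assert (Hd : 0 < d) by (apply Rinv_0_lt_compat; lra).
  assert (HKd : K * d < 1).
  { unfold d. apply (Rmult_lt_reg_r (K + 1)); [lra|]. rewrite Rmult_assoc, Rinv_l; lra. }
  assert (Hd1 : d <= 1).
  { unfold d. rewrite <- Rinv_1. apply Rinv_le_contravar; lra. }
  assert (Hsteps : forall (n : nat) t, 0 <= t <= T -> t <= INR n * d -> profile_data t).
  { induction n as [|n IH]; intros t Ht Htn.
    - simpl in Htn. replace t with 0 by lra.
      unfold profile_data. rewrite Hg0, Hh0. lra.
    - rewrite S_INR in Htn.
      destruct (Rle_or_lt t (INR n * d)) as [Hle|Hlt]; [exact (IH t Ht Hle)|].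
      assert (Hn : 0 <= INR n * d) by (apply Rmult_le_pos; [apply pos_INR|lra]).
      apply (profile_data_propagation K T (INR n * d) t HK HB); try lra.
      + assert ((t - INR n * d) ^ 4 <= d ^ 4) by (apply pow_incr; lra).
        assert (d ^ 4 <= d) by (simpl; assert (d * d <= 1) by nra; nra).
        nra.
      + apply IH; lra. }
  intros t Ht. destruct (INR_unbounded (t / d)) as [n Hn].
  apply (Hsteps n t Ht). apply Rlt_le.
  apply (Rmult_lt_reg_r (/ d)); [apply Rinv_0_lt_compat; lra|].
  rewrite Rmult_assoc, Rinv_r by lra. lra.
Qed.

Lemma profile_pos (e : R) : 0 < e ->
  (forall s, 0 < s -> 0 <= B s) -> (forall s, 0 < s < e -> 0 < B s) ->
  forall t, 0 < t -> 0 < g t.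
Proof.
  intros He HB_nonneg HB_pos.
  assert (Hh_pos : forall s, 0 < s -> 0 < h s)
    by exact (layer_positive h h1 h2 B Hh Hh1 HBh e Hh0 He HB_nonneg HB_pos).
  apply (layer_positive g g1 g2 h Hg Hg1 Hhg 1 Hg0); [lra| |].
  - intros s Hs. left. apply Hh_pos, Hs.
  - intros s Hs. apply Hh_pos. lra.
Qed.

End BiharmonicProfile.

Section LinearOperation.
Variable op : R -> R -> R.
Hypothesis op_continuous : forall p : R * R, continuous (fun z : R * R => op (fst z) (snd z)) p.
Hypothesis op_derive : forall (f1 f2 : R -> R) x, ex_derive f1 x -> ex_derive f2 x ->
  ex_derive (fun t => op (f1 t) (f2 t)) x /\
  Derive (fun t => op (f1 t) (f2 t)) x = op (Derive f1 x) (Derive f2 x).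

Lemma dx_op (f1 f2 : R -> R -> R) :
  (forall x y, ex_derive (fun t => f1 t y) x) -> (forall x y, ex_derive (fun t => f2 t y) x) ->
  dx (fun x y => op (f1 x y) (f2 x y)) = fun x y => op (dx f1 x y) (dx f2 x y).
Proof.
  intros H1 H2. apply functional_extensionality; intro x; apply functional_extensionality; intro y.
  exact (proj2 (op_derive _ _ x (H1 x y) (H2 x y))).
Qed.

Lemma dy_op (f1 f2 : R -> R -> R) :
  (forall x y, ex_derive (fun t => f1 x t) y) -> (forall x y, ex_derive (fun t => f2 x t) y) ->
  dy (fun x y => op (f1 x y) (f2 x y)) = fun x y => op (dy f1 x y) (dy f2 x y).
Proof.
  intros H1 H2. apply functional_extensionality; intro x; apply functional_extensionality; intro y.
  exact (proj2 (op_derive _ _ y (H1 x y) (H2 x y))).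
Qed.

Lemma Ck2_op (n : nat) : forall f1 f2 : R -> R -> R,
  Ck2 n f1 -> Ck2 n f2 -> Ck2 n (fun x y => op (f1 x y) (f2 x y)).
Proof.
  induction n as [|n IH]; intros f1 f2 C1 C2.
  - intro p. exact (continuous_comp_2 (fun z : R * R => f1 (fst z) (snd z))
                      (fun z : R * R => f2 (fst z) (snd z)) op p (C1 p) (C2 p) (op_continuous _)).
  - destruct C1 as [C1 [D1 [X1 Y1]]], C2 as [C2 [D2 [X2 Y2]]].
    split; [|split; [|split]].
    + intro p. exact (continuous_comp_2 (fun z : R * R => f1 (fst z) (snd z))
                        (fun z : R * R => f2 (fst z) (snd z)) op p (C1 p) (C2 p) (op_continuous _)).
    + intros x y. split.
      * exact (proj1 (op_derive _ _ x (proj1 (D1 x y)) (proj1 (D2 x y)))).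
      * exact (proj1 (op_derive _ _ y (proj2 (D1 x y)) (proj2 (D2 x y)))).
    + rewrite dx_op by (intros x y; first [exact (proj1 (D1 x y)) | exact (proj1 (D2 x y))]). apply IH; assumption.
    + rewrite dy_op by (intros x y; first [exact (proj2 (D1 x y)) | exact (proj2 (D2 x y))]). apply IH; assumption.
Qed.

End LinearOperation.

Lemma Rminus_continuous : forall p : R * R, continuous (fun z : R * R => fst z - snd z) p.
Proof.
  intro p. apply (continuous_minus (fun z : R * R => fst z) (fun z : R * R => snd z));
    [apply continuous_fst|apply continuous_snd].
Qed.

Lemma Rplus_continuous : forall p : R * R, continuous (fun z : R * R => fst z + snd z) p.
Proof.
  intro p. apply (continuous_plus (fun z : R * R => fst z) (fun z : R * R => snd z));
    [apply continuous_fst|apply continuous_snd].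
Qed.

Lemma Rminus_derive (f1 f2 : R -> R) x : ex_derive f1 x -> ex_derive f2 x ->
  ex_derive (fun t => f1 t - f2 t) x /\ Derive (fun t => f1 t - f2 t) x = Derive f1 x - Derive f2 x.
Proof. intros H1 H2. exact (conj (ex_derive_minus f1 f2 x H1 H2) (Derive_minus f1 f2 x H1 H2)). Qed.

Lemma Rplus_derive (f1 f2 : R -> R) x : ex_derive f1 x -> ex_derive f2 x ->
  ex_derive (fun t => f1 t + f2 t) x /\ Derive (fun t => f1 t + f2 t) x = Derive f1 x + Derive f2 x.
Proof. intros H1 H2. exact (conj (ex_derive_plus f1 f2 x H1 H2) (Derive_plus f1 f2 x H1 H2)). Qed.

Lemma Ck2_minus (n : nat) (f1 f2 : R -> R -> R) :
  Ck2 n f1 -> Ck2 n f2 -> Ck2 n (fun x y => f1 x y - f2 x y).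
Proof. exact (Ck2_op Rminus Rminus_continuous Rminus_derive n f1 f2). Qed.

Lemma Ck2_lap (n : nat) (f : R -> R -> R) : Ck2 (S (S n)) f -> Ck2 n (lap f).
Proof.
  intros [_ [_ [[_ [_ [Cxx _]]] [_ [_ [_ Cyy]]]]]].
  exact (Ck2_op Rplus Rplus_continuous Rplus_derive n _ _ Cxx Cyy).
Qed.

Lemma dxx_minus (n : nat) (f1 f2 : R -> R -> R) : Ck2 (S (S n)) f1 -> Ck2 (S (S n)) f2 ->
  dx (dx (fun x y => f1 x y - f2 x y)) = fun x y => dx (dx f1) x y - dx (dx f2) x y.
Proof.
  intros [_ [D1 [[_ [DD1 _]] _]]] [_ [D2 [[_ [DD2 _]] _]]].
  rewrite (dx_op Rminus Rminus_derive f1 f2)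
    by (intros x y; first [exact (proj1 (D1 x y)) | exact (proj1 (D2 x y))]).
  apply (dx_op Rminus Rminus_derive); intros x y; [exact (proj1 (DD1 x y))|exact (proj1 (DD2 x y))].
Qed.

Lemma Ck2_axis_derive (n : nat) (f : R -> R -> R) :
  Ck2 (S n) f -> forall t, is_derive (fun s => f s 0) t (dx f t 0).
Proof. intros [_ [H _]] t. apply Derive_correct. exact (proj1 (H t 0)). Qed.

Lemma cont2_axis (f : R -> R -> R) : cont2 f -> forall t, continuous (fun s => f s 0) t.
Proof.
  intros H t. apply (continuous_comp_2 (fun s => s) (fun _ => 0) f t).
  - apply continuous_id.
  - apply continuous_const.
  - apply (H (t, 0)).
Qed.


Lemma radius_derive (y t : R) : 0 < t ^ 2 + y ^ 2 ->
  is_derive (fun s => sqrt (s ^ 2 + y ^ 2)) t (t / sqrt (t ^ 2 + y ^ 2)).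
Proof.
  intro H. auto_derive; [lra|].
  replace (t * (t * 1) + y * (y * 1)) with (t ^ 2 + y ^ 2) by ring.
  assert (0 < sqrt (t ^ 2 + y ^ 2)) by (apply sqrt_lt_R0; lra). field. lra.
Qed.

Lemma direction_derive (y t : R) : 0 < t ^ 2 + y ^ 2 ->
  is_derive (fun s => s / sqrt (s ^ 2 + y ^ 2)) t (y ^ 2 / (sqrt (t ^ 2 + y ^ 2)) ^ 3).
Proof.
  intro H.
  assert (Hr : 0 < sqrt (t ^ 2 + y ^ 2)) by (apply sqrt_lt_R0; lra).
  assert (E : sqrt (t ^ 2 + y ^ 2) * sqrt (t ^ 2 + y ^ 2) = t ^ 2 + y ^ 2)
    by (apply sqrt_sqrt; lra).
  auto_derive;
    replace (t * (t * 1) + y * (y * 1)) with (t ^ 2 + y ^ 2) by ring.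
  - repeat split; lra.
  - set (r := sqrt (t ^ 2 + y ^ 2)) in *.
    replace (y ^ 2) with (r * r - t ^ 2) by lra. field. lra.
Qed.

Lemma radius_pos_near (x y : R) : 0 < x ^ 2 + y ^ 2 ->
  locally x (fun t => 0 < t ^ 2 + y ^ 2).
Proof.
  intro H.
  assert (Hc : continuous (fun t => t ^ 2 + y ^ 2) x)
    by (apply (ex_derive_continuous (fun t => t ^ 2 + y ^ 2)); auto_derive; exact I).
  exact (Hc _ (open_gt 0 _ H)).
Qed.

Section RadialProfile.
Variables (f : R -> R -> R) (p p1 p2 : R -> R).
Hypothesis Hf : forall x y, f x y = p (sqrt (x ^ 2 + y ^ 2)).
Hypothesis Hp : forall s, is_derive p s (p1 s).
Hypothesis Hp1 : forall s, is_derive p1 s (p2 s).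

Lemma dx_radial (t y : R) : 0 < t ^ 2 + y ^ 2 ->
  is_derive (fun s => f s y) t (p1 (sqrt (t ^ 2 + y ^ 2)) * (t / sqrt (t ^ 2 + y ^ 2))).
Proof.
  intro H.
  apply (is_derive_ext (fun s => p (sqrt (s ^ 2 + y ^ 2)))); [intros; symmetry; apply Hf|].
  pose proof (is_derive_comp p (fun s => sqrt (s ^ 2 + y ^ 2)) t _ _ (Hp _) (radius_derive y t H))
    as E.
  unfold scal in E; simpl in E; unfold mult in E; simpl in E.
  rewrite Rmult_comm. exact E.
Qed.

Lemma dxx_radial (x y : R) : 0 < x ^ 2 + y ^ 2 ->
  dx (dx f) x y = p2 (sqrt (x ^ 2 + y ^ 2)) * (x / sqrt (x ^ 2 + y ^ 2)) ^ 2
                  + p1 (sqrt (x ^ 2 + y ^ 2)) * (y ^ 2 / (sqrt (x ^ 2 + y ^ 2)) ^ 3).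
Proof.
  intro H. unfold dx at 1. apply is_derive_unique.
  apply (is_derive_ext_loc (fun t => p1 (sqrt (t ^ 2 + y ^ 2)) * (t / sqrt (t ^ 2 + y ^ 2)))).
  { generalize (radius_pos_near x y H). apply filter_imp. intros t Ht.
    symmetry. apply is_derive_unique, dx_radial, Ht. }
  pose proof (is_derive_comp p1 (fun s => sqrt (s ^ 2 + y ^ 2)) x _ _ (Hp1 _)
                (radius_derive y x H)) as E1.
  pose proof (is_derive_mult _ _ x _ _ E1 (direction_derive y x H) Rmult_comm) as E2.
  unfold scal, plus, mult in E2; simpl in E2; unfold mult in E2; simpl in E2.
  replace (p2 (sqrt (x ^ 2 + y ^ 2)) * (x / sqrt (x ^ 2 + y ^ 2)) ^ 2
           + p1 (sqrt (x ^ 2 + y ^ 2)) * (y ^ 2 / sqrt (x ^ 2 + y ^ 2) ^ 3))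
    with (x / sqrt (x ^ 2 + y ^ 2) * p2 (sqrt (x ^ 2 + y ^ 2)) * (x / sqrt (x ^ 2 + y ^ 2))
          + p1 (sqrt (x ^ 2 + y ^ 2)) * (y ^ 2 / sqrt (x ^ 2 + y ^ 2) ^ 3)) by ring.
  exact E2.
Qed.

End RadialProfile.

Lemma lap_radial (f : R -> R -> R) (p p1 p2 : R -> R) :
  (forall x y, f x y = p (sqrt (x ^ 2 + y ^ 2))) ->
  (forall s, is_derive p s (p1 s)) -> (forall s, is_derive p1 s (p2 s)) ->
  forall x y, 0 < x ^ 2 + y ^ 2 ->
  lap f x y = p2 (sqrt (x ^ 2 + y ^ 2)) + p1 (sqrt (x ^ 2 + y ^ 2)) / sqrt (x ^ 2 + y ^ 2).
Proof.
  intros Hf Hp Hp1 x y H. unfold lap.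
  change (dy (dy f) x y) with (dx (dx (fun a b => f b a)) y x).
  assert (Hswap : forall a b, f b a = p (sqrt (a ^ 2 + b ^ 2)))
    by (intros a b; rewrite Hf, Rplus_comm; reflexivity).
  rewrite (dxx_radial f p p1 p2 Hf Hp Hp1 x y H).
  rewrite (dxx_radial (fun a b => f b a) p p1 p2 Hswap Hp Hp1 y x) by lra.
  rewrite (Rplus_comm (y ^ 2) (x ^ 2)).
  assert (Hr : 0 < sqrt (x ^ 2 + y ^ 2)) by (apply sqrt_lt_R0; lra).
  assert (E : sqrt (x ^ 2 + y ^ 2) * sqrt (x ^ 2 + y ^ 2) = x ^ 2 + y ^ 2)
    by (apply sqrt_sqrt; lra).
  set (r := sqrt (x ^ 2 + y ^ 2)) in *.
  transitivity (p2 r * ((x ^ 2 + y ^ 2) / (r * r)) + p1 r * ((x ^ 2 + y ^ 2) / (r * (r * r)))).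
  - field. lra.
  - rewrite <- E. field. lra.
Qed.

Lemma radial_axis (f : R -> R -> R) : radial f ->
  forall x y, f x y = f (sqrt (x ^ 2 + y ^ 2)) 0.
Proof.
  intros [p Hp] x y. rewrite (Hp x y), (Hp (sqrt (x ^ 2 + y ^ 2)) 0).
  rewrite pow2_sqrt by (pose proof (pow2_ge_0 x); pose proof (pow2_ge_0 y); lra).
  f_equal. f_equal. ring.
Qed.

Lemma sqrt_axis (s : R) : 0 <= s -> sqrt (s ^ 2 + 0 ^ 2) = s.
Proof. intro Hs. replace (s ^ 2 + 0 ^ 2) with (s ^ 2) by ring. apply sqrt_pow2, Hs. Qed.

Lemma radial_minus (f1 f2 : R -> R -> R) : radial f1 -> radial f2 ->
  radial (fun x y => f1 x y - f2 x y).
Proof.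
  intros R1 R2. exists (fun r => f1 r 0 - f2 r 0). intros x y.
  rewrite (radial_axis f1 R1 x y), (radial_axis f2 R2 x y). reflexivity.
Qed.

(* At the origin, radial symmetry gives f_yy = f_xx, hence Delta f = 2 f_xx. *)
Lemma lap_radial_origin (f : R -> R -> R) : radial f -> lap f 0 0 = 2 * dx (dx f) 0 0.
Proof.
  intro Rf.
  assert (Hswap : (fun a b => f b a) = f).
  { apply functional_extensionality; intro a; apply functional_extensionality; intro b.
    rewrite (radial_axis f Rf b a), (radial_axis f Rf a b), Rplus_comm. reflexivity. }
  unfold lap. change (dy (dy f) 0 0) with (dx (dx (fun a b => f b a)) 0 0).
  rewrite Hswap. ring.
Qed.

Section RadialLaplacian.
Variable f : R -> R -> R.
Hypothesis Rf : radial f.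
Hypothesis Hd1 : forall s, is_derive (fun t => f t 0) s (dx f s 0).
Hypothesis Hd2 : forall s, is_derive (fun t => dx f t 0) s (dx (dx f) s 0).

Lemma lap_radial_axis (x y : R) : 0 < x ^ 2 + y ^ 2 ->
  lap f x y = dx (dx f) (sqrt (x ^ 2 + y ^ 2)) 0
              + dx f (sqrt (x ^ 2 + y ^ 2)) 0 / sqrt (x ^ 2 + y ^ 2).
Proof. exact (lap_radial f (fun s => f s 0) _ _ (radial_axis f Rf) Hd1 Hd2 x y). Qed.

Lemma lap_on_axis (s : R) : 0 < s -> lap f s 0 = dx (dx f) s 0 + dx f s 0 / s.
Proof.
  intro Hs. rewrite lap_radial_axis by (simpl; nra).
  rewrite sqrt_axis by lra. reflexivity.
Qed.

Lemma radial_lap : radial (lap f).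
Proof.
  exists (fun r => lap f r 0). intros x y.
  destruct (Rlt_or_le 0 (x ^ 2 + y ^ 2)) as [Hpos|Hzero].
  - rewrite lap_radial_axis by exact Hpos.
    rewrite lap_on_axis by (apply sqrt_lt_R0, Hpos). reflexivity.
  - assert (x = 0) by nra. assert (y = 0) by nra. subst x y.
    replace (0 ^ 2 + 0 ^ 2) with 0 by ring. rewrite sqrt_0. reflexivity.
Qed.

End RadialLaplacian.

Section RadialBiharmonic.
Variable w : R -> R -> R.
Hypothesis Cw : Ck2 4 w.
Hypothesis Rw : radial w.
Hypothesis Hw0 : w 0 0 = 0.
Hypothesis Hw2 : dx (dx w) 0 0 = 0.

Lemma lap_C2 : Ck2 2 (lap w).
Proof. exact (Ck2_lap 2 w Cw). Qed.

Lemma w_derive1 : forall s, is_derive (fun t => w t 0) s (dx w s 0).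
Proof. exact (Ck2_axis_derive 3 w Cw). Qed.

Lemma w_derive2 : forall s, is_derive (fun t => dx w t 0) s (dx (dx w) s 0).
Proof. exact (Ck2_axis_derive 2 (dx w) (proj1 (proj2 (proj2 Cw)))). Qed.

Lemma lap_derive1 : forall s, is_derive (fun t => lap w t 0) s (dx (lap w) s 0).
Proof. exact (Ck2_axis_derive 1 (lap w) lap_C2). Qed.

Lemma lap_derive2 : forall s, is_derive (fun t => dx (lap w) t 0) s (dx (dx (lap w)) s 0).
Proof. exact (Ck2_axis_derive 0 (dx (lap w)) (proj1 (proj2 (proj2 lap_C2)))). Qed.

Lemma bilap_on_axis (s : R) : 0 < s ->
  bilap w s 0 = dx (dx (lap w)) s 0 + dx (lap w) s 0 / s.
Proof.
  exact (lap_on_axis (lap w) (radial_lap w Rw w_derive1 w_derive2) lap_derive1 lap_derive2 s).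
Qed.

Lemma lap_at_origin : lap w 0 0 = 0.
Proof. rewrite (lap_radial_origin w Rw), Hw2. ring. Qed.

Lemma axis_nonneg (K T : R) : 0 <= K ->
  (forall s, 0 <= s <= T -> K * Rmin (w s 0) 0 <= bilap w s 0) ->
  forall t, 0 <= t <= T -> 0 <= w t 0.
Proof.
  exact (profile_nonneg _ _ _ _ _ _ (fun s => bilap w s 0)
           w_derive1 w_derive2 lap_derive1 lap_derive2
           (lap_on_axis w Rw w_derive1 w_derive2) bilap_on_axis Hw0 lap_at_origin K T).
Qed.

Lemma axis_pos : (forall s, 0 < s -> 0 <= bilap w s 0) -> 0 < bilap w 0 0 ->
  forall t, 0 < t -> 0 < w t 0.
Proof.
  intros HB_nonneg HB0.
  assert (Hcont : continuous (fun s => bilap w s 0) 0)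
    by exact (cont2_axis (bilap w) (Ck2_lap 0 (lap w) lap_C2) 0).
  destruct (Hcont _ (open_gt 0 _ HB0)) as [eps Heps].
  apply (profile_pos _ _ _ _ _ _ (fun s => bilap w s 0)
           w_derive1 w_derive2 lap_derive1 lap_derive2
           (lap_on_axis w Rw w_derive1 w_derive2) bilap_on_axis Hw0 lap_at_origin eps
           (cond_pos eps) HB_nonneg).
  intros s Hs. apply Heps.
  unfold ball; simpl; unfold AbsRing_ball, abs, minus, plus, opp; simpl.
  rewrite Ropp_0, Rplus_0_r, Rabs_pos_eq; lra.
Qed.

End RadialBiharmonic.

Lemma Rpower_positive (x y : R) : 0 < Rpower x y.
Proof. apply exp_pos. Qed.

Lemma Rpower_neg_antitone (a b c : R) : 0 < c -> 0 < a <= b ->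
  Rpower b (- c) <= Rpower a (- c).
Proof.
  intros Hc Hab. rewrite !Rpower_Ropp. apply Rinv_le_contravar; [apply Rpower_positive|].
  apply Rle_Rpower_l; lra.
Qed.

Lemma negpow_lower_lipschitz (q m u v : R) : 0 < q -> 0 < m -> m <= u -> m <= v ->
  q * Rpower m (- q - 1) * Rmin (u - v) 0 <= Rpower v (- q) - Rpower u (- q).
Proof.
  intros Hq Hm Hu Hv. destruct (Rle_or_lt v u) as [Hvu|Hvu].
  - rewrite Rmin_right by lra. pose proof (Rpower_neg_antitone v u q Hq ltac:(lra)). lra.
  - rewrite Rmin_left by lra.
    destruct (MVT_cor2 (fun x => Rpower x (- q)) (fun x => - q * Rpower x (- q - 1)) u v Hvu)
      as [c [Hc Hcuv]].
    { intros c Hc. apply derivable_pt_lim_power. lra. }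
    rewrite Hc.
    assert (Rpower c (- q - 1) <= Rpower m (- q - 1)).
    { replace (- q - 1) with (- (q + 1)) by ring. apply Rpower_neg_antitone; lra. }
    assert (0 <= q * (v - u)) by (apply Rmult_le_pos; lra).
    nra.
Qed.

Lemma negpow_comparison (q T : R) (u v : R -> R) : 0 < q -> 0 <= T ->
  (forall s, continuity_pt u s) -> (forall s, continuity_pt v s) ->
  (forall s, 0 < u s) -> (forall s, 0 < v s) ->
  exists K, 0 <= K /\
    forall s, 0 <= s <= T -> K * Rmin (u s - v s) 0 <= Rpower (v s) (- q) - Rpower (u s) (- q).
Proof.
  intros Hq HT Cu Cv Pu Pv.
  destruct (continuity_ab_min u 0 T HT (fun c _ => Cu c)) as [mu [Hmu _]].
  destruct (continuity_ab_min v 0 T HT (fun c _ => Cv c)) as [mv [Hmv _]].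
  set (m := Rmin (u mu) (v mv)).
  assert (Hm : 0 < m) by (apply Rmin_glb_lt; auto).
  exists (q * Rpower m (- q - 1)). split.
  - pose proof (Rpower_positive m (- q - 1)). nra.
  - intros s Hs. apply negpow_lower_lipschitz; [exact Hq|exact Hm| |].
    + pose proof (Rmin_l (u mu) (v mv)). specialize (Hmu s Hs). unfold m. lra.
    + pose proof (Rmin_r (u mu) (v mv)). specialize (Hmv s Hs). unfold m. lra.
Qed.

(* Main theorem: w = U - V is radial, C^4, vanishes to second order at 0 and
   satisfies Delta^2 w >= K min(w,0) on every [0,T]; the profile comparison
   principles give w >= 0, and w > 0 off the origin when Delta^2 w(0) > 0. *)
Theorem mainTheorem14 (q : R) (U V : R -> R -> R) :
  0 < q ->
  Ck2 4 U -> Ck2 4 V -> radial U -> radial V ->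
  (forall x y, 0 < U x y) -> (forall x y, 0 < V x y) ->
  (forall r, 0 <= r ->
     bilap (fun x y => U x y - V x y) r 0 >= Rpower (V r 0) (- q) - Rpower (U r 0) (- q)) ->
  U 0 0 = V 0 0 ->
  (forall k : nat, (1 <= k <= 3)%nat ->
     Derive_n (fun r => U r 0) k 0 = Derive_n (fun r => V r 0) k 0) ->
  (forall r, 0 <= r -> U r 0 >= V r 0) /\
  (bilap (fun x y => U x y - V x y) 0 0 > 0 -> forall r, 0 < r -> U r 0 > V r 0).
Proof.
  intros Hq CU CV RU RV PU PV Hcmp H0 Hk.
  set (w := fun x y => U x y - V x y) in *.
  assert (Cw : Ck2 4 w) by exact (Ck2_minus 4 U V CU CV).
  assert (Rw : radial w) by exact (radial_minus U V RU RV).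
  assert (Hw0 : w 0 0 = 0) by (unfold w; rewrite H0; ring).
  assert (Hw2 : dx (dx w) 0 0 = 0).
  { unfold w. rewrite (dxx_minus 2 U V CU CV).
    assert (H2 : dx (dx U) 0 0 = dx (dx V) 0 0) by exact (Hk 2%nat ltac:(lia)).
    rewrite H2. ring. }
  assert (Hnonneg : forall r, 0 <= r -> 0 <= w r 0).
  { intros T HT.
    destruct (negpow_comparison q T (fun s => U s 0) (fun s => V s 0) Hq HT
                (fun s => is_derive_continuity_pt _ s _ (Ck2_axis_derive 3 U CU s))
                (fun s => is_derive_continuity_pt _ s _ (Ck2_axis_derive 3 V CV s))
                (fun s => PU s 0) (fun s => PV s 0)) as [K [HK Hlow]].
    apply (axis_nonneg w Cw Rw Hw0 Hw2 K T HK); [|lra].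
    intros s Hs. specialize (Hlow s Hs). specialize (Hcmp s (proj1 Hs)). unfold w in *. lra. }
  assert (Hge : forall r, 0 <= r -> V r 0 <= U r 0).
  { intros r Hr. specialize (Hnonneg r Hr). unfold w in Hnonneg. lra. }
  split; [intros r Hr; specialize (Hge r Hr); lra|].
  intros Hpos r Hr.
  enough (0 < w r 0) by (unfold w in *; lra).
  apply (axis_pos w Cw Rw Hw0 Hw2); [|lra|exact Hr].
  intros s Hs. specialize (Hcmp s ltac:(lra)).
  pose proof (Rpower_neg_antitone (V s 0) (U s 0) q Hq (conj (PV s 0) (Hge s ltac:(lra)))).
  lra.
Qed.
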